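(* Let $\lambda\in(0,1)$ and let $G=([n],E)$ be any undirected graph (information graph). Then \[ \frac{\alpha(G) - (\alpha(G)-1)\lambda}{\alpha(G)} \;\ge\; \gamma_\lambda(G) \;\ge\; \frac{\theta(G) - (\theta(G)-1)\lambda}{\theta(G)+\lambda}, \] where $\alpha(G)$ is the independence number of $G$ and $\theta(G)$ is its clique cover number (the least number of cliques partitioning the vertex set).
   Context: For a finite base set $S$ and $f:2^S\to\mathbb{R}_{\ge0}$, write $f(A\mid B)=f(A\cup B)-f(B)$. $f$ is normalized if $f(\emptyset)=0$, monotone if $f(\{e\}\mid A)\ge0$ for all $e,A$, submodular if $f(\{e\}\mid A)\ge f(\{e\}\mid B)$ for $A\subseteq B\subseteq S$, $e\in S\setminus B$. Such $f$ has total curvature $\lambda\in(0,1)$ if $f(\{e\}\mid A)\ge(1-\lambda)f(\{e\})$ for all $e\in S$ and $A\subseteq S\setminus\{e\}$; $\mathcal{F}_\lambda$ is the set of normalized, monotone, submodular functions with total curvature $\lambda$. There are $n$ agents $[n]$ with decision sets $X_i\subseteq S$ forming a partition of $S$; action profiles $x\in X=X_1\times\cdots\times X_n$ are valued by $f(x)=f(\{x_1,\dots,x_n\})$, and $x_M=\{x_i:i\in M\}$. Let $x^{\mathrm{opt}}\in\arg\max_{x\in X}f(x)$. Given an undirected graph $G=([n],E)$, let $\mathcal{N}_i=\{j<i : (j,i)\in E\}$. The generalized greedy algorithm produces $x^{\mathrm{sol}}$ with $x^{\mathrm{sol}}_i\in\arg\max_{x_i\in X_i} f(x_i\mid x^{\mathrm{sol}}_{\mathcal{N}_i})$,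 taking $x^{\mathrm{sol}}$ to be the worst among all possible greedy outcomes. Define $\gamma(f,X,G)=f(x^{\mathrm{sol}})/f(x^{\mathrm{opt}})$ and $\gamma_\lambda(G)=\inf_{f\in\mathcal{F}_\lambda,X}\gamma(f,X,G)$. *)

From HB Require Import structures.
From mathcomp Require Import all_boot all_order all_algebra.
From mathcomp Require Import classical_sets reals.
Set Implicit Arguments. Unset Strict Implicit. Unset Printing Implicit Defensive.
Import Order.TTheory GRing.Theory Num.Theory.
Local Open Scope ring_scope.

Section Defs.
Variable R : realType.

Section SetFun.
Variable S : finType.
Implicit Types (f : {set S} -> R).

Definition marg f (A B : {set S}) : R := f (A :|: B) - f B.

Definition nonneg_sf f := forall A, 0 <= f A.
Definition normalized f := f (finset.set0) = 0.
Definition monotone_sf f := forall (e : S) (A : {set S}), 0 <= marg f (finset.set1 e) A.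
Definition submodular f :=
  forall (A B : {set S}) (e : S), A \subset B -> e \notin B ->
    marg f (finset.set1 e) B <= marg f (finset.set1 e) A.
Definition total_curvature (lam : R) f :=
  forall (e : S) (A : {set S}), e \notin A -> (1 - lam) * f (finset.set1 e) <= marg f (finset.set1 e) A.

Definition in_F (lam : R) f :=
  [/\ nonneg_sf f, normalized f, monotone_sf f, submodular f & total_curvature lam f].
End SetFun.

Section Agents.
Variables (n : nat) (S : finType).

Definition decision_partition (X : 'I_n -> {set S}) :=
  [/\ forall i, X i != finset.set0,
      forall i j, i != j -> [disjoint X i & X j]
    & forall s : S, exists i, s \in X i].

Definition profile (X : 'I_n -> {set S}) (x : 'I_n -> S) := forall i, x i \in X i.

Definition xM (x : 'I_n -> S) (M : {set 'I_n}) : {set S} := x @: M.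

Definition fval (f : {set S} -> R) (x : 'I_n -> S) : R := f (xM x (finset.setTfor 'I_n)).

Definition nbrs (e : rel 'I_n) (i : 'I_n) : {set 'I_n} := finset (fun j : 'I_n => (j < i)%N && e j i).

(* x is a possible outcome of the generalized greedy algorithm *)
Definition greedy (f : {set S} -> R) (X : 'I_n -> {set S}) (e : rel 'I_n) (x : 'I_n -> S) :=
  profile X x /\
  forall i (y : S), y \in X i ->
    marg f (finset.set1 y) (xM x (nbrs e i)) <= marg f (finset.set1 (x i)) (xM x (nbrs e i)).

(* f(x^opt) = max over action profiles (f >= 0, so starting the max at 0 is harmless) *)
Definition fopt (f : {set S} -> R) (X : 'I_n -> {set S}) : R :=
  \big[Num.max/0]_(x : {ffun 'I_n -> S} | [forall i, x i \in X i]) fval f x.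

(* gamma(f,X,G): ratio for the worst greedy outcome (inf over a finite set = min) *)
Definition gamma (f : {set S} -> R) (X : 'I_n -> {set S}) (e : rel 'I_n) : R :=
  inf (fun r : R => exists x, greedy f X e x /\ r = fval f x / fopt f X).
End Agents.

Definition gamma_lambda (lam : R) (n : nat) (e : rel 'I_n) : R :=
  inf [set r : R | exists (S : finType) (f : {set S} -> R) (X : 'I_n -> {set S}),
        [/\ in_F lam f, decision_partition X, 0 < fopt f X & r = gamma f X e]].

Definition is_clique n (e : rel 'I_n) (A : {set 'I_n}) :=
  [forall i in A, forall j in A, (i != j) ==> e i j].
Definition is_indep n (e : rel 'I_n) (A : {set 'I_n}) :=
  [forall i in A, forall j in A, ~~ e i j].

Definition alpha n (e : rel 'I_n) : nat :=
  \max_(A : {set 'I_n} | is_indep e A) #|A|.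

(* clique cover number: least number of cliques partitioning the vertex set
   (finset's [partition P D] requires blocks nonempty, disjoint, covering D;
    the start value n is attained by the partition into singletons) *)
Definition theta n (e : rel 'I_n) : nat :=
  \big[minn/n]_(P : {set {set 'I_n}} | finset.partition P (finset.setTfor 'I_n) &&
                                         [forall A in P, is_clique e A]) #|P|.
End Defs.

(* Upper bound: let I be a maximum independent set and give each agent i the two
   actions (i, false) and (i, true).  On I x {false} the function trap charges
   1 - lam per element plus a bonus lam for the first one, on I x {true} it is
   modular with weight 1, and it vanishes elsewhere.  No agent of I sees another
   agent of I, so every agent of I is indifferent between its two actions and the
   worst greedy run takes I x {false}: it earns (1 - lam) alpha + lam, while
   I x {true} earns alpha.

   Lower bound: for a greedy outcome x and any profile o, curvature and
   submodularity give f(o) <= f(x) + lam * sum_i f(x_i | x_{N_i}).  Inside a clique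
   B of a minimum clique cover every agent sees all earlier members of B, so the
   sum is at most sum_B f(x_B); curvature also gives
   f(x_B) + (1 - lam) sum_{i notin B} f(x_i) <= f(x).  Summing over the theta
   cliques and eliminating sum_B f(x_B) yields
   (theta - (theta - 1) lam) f(o) <= (theta + lam) f(x). *)

From HB Require Import structures.
From mathcomp Require Import all_boot all_order all_algebra.
From mathcomp Require Import classical_sets reals.
(* Re-imported so that finset's set operations shadow those of classical_sets. *)
From mathcomp Require Import finset.
From mathcomp Require Import ring lra.
Import Order.TTheory GRing.Theory Num.Theory.
Local Open Scope ring_scope.
Set Implicit Arguments. Unset Strict Implicit. Unset Printing Implicit Defensive.

Section Graphs.
Variables (n : nat) (e : rel 'I_n).

Definition clique_cover (P : {set {set 'I_n}}) :=
  partition P [set: 'I_n] && [forall B in P, is_clique e B].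

Lemma clique_edge (B : {set 'I_n}) i j :
  is_clique e B -> i \in B -> j \in B -> i != j -> e i j.
Proof.
move=> /forall_inP/(_ i) + iB => /(_ iB)/forall_inP/(_ j) + jB => /(_ jB).
exact/implyP.
Qed.

Lemma indep_nonedge (I : {set 'I_n}) i j :
  is_indep e I -> i \in I -> j \in I -> ~~ e i j.
Proof. by move=> /forall_inP/(_ i) + iI => /(_ iI)/forall_inP/(_ j); apply. Qed.

Lemma alpha_attained : exists2 I, is_indep e I & #|I| = alpha e.
Proof.
have indep0 : is_indep e set0 by apply/forall_inP => i; rewrite inE.
have [I indepI ->] : {I | I \in is_indep e & alpha e = #|I|}.
  by apply: eq_bigmax_cond; apply/card_gt0P; exists set0.
by exists I.
Qed.

Lemma alpha_gt0 : irreflexive e -> (0 < n)%N -> (0 < alpha e)%N.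
Proof.
move=> e_irr n_gt0; pose i0 : 'I_n := Ordinal n_gt0.
have indep1 : is_indep e [set i0].
  by apply/forall_inP => i /set1P -> ; apply/forall_inP => j /set1P ->; rewrite e_irr.
by rewrite -(cards1 i0); apply: leq_bigmax_cond.
Qed.

Lemma theta_attained : exists2 P, clique_cover P & #|P| = theta e.
Proof.
have singletons_cover : clique_cover [set [set i] | i : 'I_n].
  apply/andP; split.
  - apply/and3P; split.
    + apply/eqP/setP => j; rewrite cover_imset inE.
      by apply/bigcupP; exists j; rewrite ?inE.
    + apply/trivIsetP => _ _ /imsetP [i _ ->] /imsetP [j _ ->] ij.
      by rewrite disjoints1 inE; apply: contra ij => /eqP ->.
    + by apply/imsetP => -[i _ /setP /(_ i)]; rewrite !inE eqxx.
  - apply/forall_inP => _ /imsetP [i _ ->]; apply/forall_inP => j /set1P ->.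
    by apply/forall_inP => k /set1P ->; rewrite eqxx.
apply: (big_ind (fun t => exists2 P, clique_cover P & #|P| = t)).
- exists [set [set i] | i : 'I_n] => //.
  by rewrite card_imset ?card_ord //; exact: set1_inj.
- move=> u v [P coverP <-] [Q coverQ <-].
  by rewrite /minn; case: ifP => _; [exists P | exists Q].
- by move=> P coverP; exists P.
Qed.

Lemma clique_cover_card_gt0 P : clique_cover P -> (0 < n)%N -> (0 < #|P|)%N.
Proof.
move=> /andP [partP _] n_gt0; have := in_setT (Ordinal n_gt0).
rewrite -(cover_partition partP) => /bigcupP [B PB _]; apply/card_gt0P; by exists B.
Qed.
End Graphs.

Lemma sum_partition (R : zmodType) (T : finType) (P : {set {set T}}) (F : T -> R) :
  partition P [set: T] -> \sum_i F i = \sum_(B in P) \sum_(i in B) F i.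
Proof.
move=> /and3P [/eqP coverP trivP _]; rewrite -big_trivIset // coverP.
by apply: eq_bigl => i; rewrite inE.
Qed.

Lemma sum_setC (R : zmodType) (T : finType) (B : {set T}) (F : T -> R) :
  \sum_(i in ~: B) F i = \sum_i F i - \sum_(i in B) F i.
Proof.
rewrite [\sum_i F i](bigID (mem B)) /= addrC addrK.
by apply: eq_bigl => i; rewrite inE.
Qed.

Lemma cardsU1I (T : finType) (a : T) (A C : {set T}) :
  a \notin A -> #|(a |: A) :&: C| = ((a \in C) + #|A :&: C|)%N.
Proof.
move=> aA; rewrite setIUl; case: (boolP (a \in C)) => aC.
  by rewrite (setIidPl _) ?sub1set // cardsU1 inE (negbTE aA).
by rewrite disjoint_setI0 ?set0U // disjoints1.
Qed.

Section SetFunctions.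
Variables (R : realType) (S : finType) (f : {set S} -> R).

Lemma marg_mem e (A : {set S}) : e \in A -> marg f [set e] A = 0.
Proof. by move=> eA; rewrite /marg (setUidPr _) ?subrr ?sub1set. Qed.

Lemma marg_telescope n (T : {set S}) (x : 'I_n -> S) (A : {set 'I_n}) :
  f (T :|: x @: A) - f T =
  \sum_(i in A) marg f [set x i] (T :|: x @: [set j in A | (j < i)%N]).
Proof.
pose pre k := [set j in A | (j < k)%N].
pose g k := f (T :|: x @: pre k).
have preS (i : 'I_n) : pre i.+1 = if i \in A then i |: pre i else pre i.
  case: ifP => iA; apply/setP => j; rewrite !inE ltnS leq_eqVlt (inj_eq val_inj);
    by case: (eqVneq j i) => [->|/negbTE ji]; rewrite ?eqxx ?ltnn ?iA ?andbF ?ji.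
have g_step (i : 'I_n) :
    g i.+1 - g i = if i \in A then marg f [set x i] (T :|: x @: pre i) else 0.
  by rewrite /g preS; case: ifP => _; rewrite ?subrr // imsetU1 setUCA.
rewrite big_mkcond /= -(eq_bigr _ (fun i _ => g_step i)).
rewrite -(big_mkord xpredT (fun k => g k.+1 - g k)) telescope_sumr // /g.
have -> : pre n = A by apply/setP => j; rewrite inE ltn_ord andbT.
have -> : pre 0%N = set0 by apply/setP => j; rewrite !inE ltn0 andbF.
by rewrite imset0 setU0.
Qed.

Lemma marg_telescopeT n (T : {set S}) (x : 'I_n -> S) :
  f (T :|: x @: [set: 'I_n]) - f T =
  \sum_i marg f [set x i] (T :|: x @: [set j : 'I_n | (j < i)%N]).
Proof.
rewrite marg_telescope; apply: eq_big => [i | i _]; first by rewrite inE.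
suff -> : [set j in [set: 'I_n] | (j < i)%N] = [set j : 'I_n | (j < i)%N] by [].
by apply/setP => j; rewrite !inE.
Qed.

Hypotheses (f_mono : monotone_sf f) (f_sub : submodular f).

Lemma marg_antitone e (A B : {set S}) :
  A \subset B -> marg f [set e] B <= marg f [set e] A.
Proof.
move=> AB; case: (boolP (e \in B)) => eB; last exact: f_sub.
by rewrite marg_mem.
Qed.

Hypothesis f0 : normalized f.

Lemma marg_le_set1 e (A : {set S}) : marg f [set e] A <= f [set e].
Proof.
by have := marg_antitone e (sub0set A); rewrite /marg setU0 f0 subr0.
Qed.

Lemma subadditive_imset n (x : 'I_n -> S) (B : {set 'I_n}) :
  f (x @: B) <= \sum_(i in B) f [set x i].
Proof.
have := marg_telescope set0 x B; rewrite set0U f0 subr0 => ->.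
by apply: ler_sum => i _; exact: marg_le_set1.
Qed.

Lemma sum_marg_nbrs_le_clique_cover n (e : rel 'I_n) (x : 'I_n -> S)
    (P : {set {set 'I_n}}) :
  clique_cover e P ->
  \sum_i marg f [set x i] (xM x (nbrs e i)) <= \sum_(B in P) f (x @: B).
Proof.
move=> /andP [partP /forall_inP cliqueP].
rewrite (sum_partition _ partP); apply: ler_sum => B PB.
have := marg_telescope set0 x B; rewrite set0U f0 subr0 => ->.
apply: ler_sum => i iB; apply: marg_antitone; rewrite set0U; apply: imsetS.
apply/fintype.subsetP => j; rewrite !inE => /andP [jB ji]; rewrite ji /=.
by apply: clique_edge (cliqueP B PB) jB iB _; rewrite neq_ltn ji.
Qed.

Variable lam : R.
Hypothesis f_curv : total_curvature lam f.

Lemma curvature_complement_bound n (x : 'I_n -> S) (B : {set 'I_n}) :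
  injective x ->
  f (x @: B) + (1 - lam) * (\sum_i f [set x i] - \sum_(i in B) f [set x i])
    <= f (x @: [set: 'I_n]).
Proof.
move=> x_inj; rewrite -sum_setC -(setUCr B) imsetU -lerBrDl marg_telescope.
rewrite mulr_sumr; apply: ler_sum => i iB; rewrite -imsetU; apply: f_curv.
by rewrite mem_imset // !inE negb_or -in_setC iB ltnn andbF.
Qed.
End SetFunctions.

Section Profiles.
Variables (S : finType) (n : nat) (X : 'I_n -> {set S}).
Hypothesis X_part : decision_partition X.

Lemma profile_index_eq (x o : 'I_n -> S) i j :
  profile X x -> profile X o -> o i = x j -> i = j.
Proof.
case: X_part => _ X_disj _ xP oP oxij; apply/eqP; apply: contraT => ij.
by have := disjointFr (X_disj i j ij) (oP i); rewrite oxij xP.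
Qed.

Lemma profile_inj x : profile X x -> injective x.
Proof. by move=> xP i j /(profile_index_eq xP xP). Qed.

Lemma greedy_exists (R : realType) (f : {set S} -> R) (e : rel 'I_n) :
  exists x, greedy f X e x.
Proof.
case: X_part => X_neq0 _ _.
have [x0 x0P] : exists x0, profile X x0.
  by apply: (@fin_all_exists _ (fun=> S) (fun i s => s \in X i)) => i; apply/set0Pn.
pose best x (i : 'I_n) := forall y, y \in X i ->
  marg f [set y] (xM x (nbrs e i)) <= marg f [set x i] (xM x (nbrs e i)).
suff /(_ n (leqnn n)) [x [xP xbest]] : forall k, (k <= n)%N ->
    exists x, profile X x /\ forall i : 'I_n, (i < k)%N -> best x i.
  by exists x; split => // i; apply: xbest.
elim=> [_|k IH lt_kn]; first by exists x0; split => // i; rewrite ltn0.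
have [x [xP xbest]] := IH (ltnW lt_kn).
pose i0 : 'I_n := Ordinal lt_kn.
case/set0Pn: (X_neq0 i0) => y0 y0X.
case: (arg_maxP (fun y => marg f [set y] (xM x (nbrs e i0))) y0X) => y yX ymax.
pose x' j := if j == i0 then y else x j.
have x'_nbrs (i : 'I_n) : (i <= k)%N -> xM x' (nbrs e i) = xM x (nbrs e i).
  move=> ik; apply: eq_in_imset => j; rewrite inE => /andP [ji _].
  by rewrite /x'; case: eqP => // ji0; move: ji; rewrite ji0 /= ltnNge ik.
exists x'; split => [j | i]; first by rewrite /x'; case: eqP => [->|].
rewrite ltnS /best => ik z zX; rewrite x'_nbrs //.
case: (eqVneq i i0) zX => [-> | ii0] zX; first by rewrite /x' eqxx; apply: ymax.
rewrite /x' (negbTE ii0); apply: xbest => //.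
by rewrite ltn_neqAle ik andbT; apply: contra ii0 => /eqP ik'; apply/eqP/val_inj.
Qed.
End Profiles.

Section GreedyBound.
Variables (R : realType) (S : finType) (n : nat) (e : rel 'I_n).
Variables (lam : R) (f : {set S} -> R) (X : 'I_n -> {set S}) (x : 'I_n -> S).
Hypotheses (lam01 : 0 < lam < 1) (fF : in_F lam f).
Hypotheses (X_part : decision_partition X) (x_greedy : greedy f X e x).

(* The i-th terms of the telescopic expansions of f(x u o) - f(x) and f(o u x) - f(o). *)
Lemma greedy_exchange o i : profile X o ->
  marg f [set o i] (x @: [set: 'I_n] :|: o @: [set j : 'I_n | (j < i)%N])
  - marg f [set x i] (o @: [set: 'I_n] :|: x @: [set j : 'I_n | (j < i)%N])
  <= lam * marg f [set x i] (xM x (nbrs e i)).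
Proof.
move=> oP; case: fF => _ f0 f_mono f_sub f_curv; case: x_greedy => xP xbest.
have /andP [lam0 lam1] := lam01.
set g := marg f [set x i] (xM x (nbrs e i)).
have g_ge0 : 0 <= g := f_mono _ _.
have g_le : g <= f [set x i] := marg_le_set1 f_mono f_sub f0 _ _.
case: (eqVneq (x i) (o i)) => [xo | xo].
  rewrite (@marg_mem _ _ _ (o i)); last by rewrite in_setU -xo imset_f ?inE.
  by rewrite sub0r (le_trans _ (mulr_ge0 (ltW lam0) g_ge0)) // oppr_le0.
have exchange_le :
    marg f [set o i] (x @: [set: 'I_n] :|: o @: [set j : 'I_n | (j < i)%N]) <= g.
  apply: le_trans (xbest i (o i) (oP i)); apply: marg_antitone => //.
  by rewrite subsetU // imsetS ?subsetT.
have curvature_ge : marg f [set x i]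
    (o @: [set: 'I_n] :|: x @: [set j : 'I_n | (j < i)%N]) >= (1 - lam) * f [set x i].
  apply: f_curv; rewrite in_setU negb_or mem_imset ?inE ?ltnn ?andbT;
    last exact: (profile_inj X_part xP).
  apply/imsetP => -[j _ xoij]; move: xo.
  by rewrite xoij (profile_index_eq X_part xP oP (esym xoij)) eqxx.
apply: le_trans (lerB exchange_le curvature_ge) _.
have -> : lam * g = g - (1 - lam) * g by ring.
by rewrite lerB // ler_wpM2l // subr_ge0 ltW.
Qed.

Lemma fval_le_greedy o : profile X o ->
  fval f o <= fval f x + lam * \sum_i marg f [set x i] (xM x (nbrs e i)).
Proof.
move=> oP.
have exch := ler_sum (index_enum 'I_n) (fun i (_ : true) => greedy_exchange i oP).
rewrite sumrB -mulr_sumr -!marg_telescopeT setUC in exch.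
by rewrite /fval /xM; lra.
Qed.

Lemma greedy_clique_cover_bound o (P : {set {set 'I_n}}) :
  profile X o -> clique_cover e P -> (0 < #|P|)%N ->
  (#|P|%:R - (#|P|%:R - 1) * lam) * fval f o <= (#|P|%:R + lam) * fval f x.
Proof.
move=> oP coverP P_gt0; have /andP [partP _] := coverP.
case: fF => _ f0 f_mono f_sub f_curv; have /andP [lam0 lam1] := lam01.
have t_ge1 : 1 <= #|P|%:R :> R by rewrite ler1n.
have exch := fval_le_greedy oP.
have nbrs_le := sum_marg_nbrs_le_clique_cover f_mono f_sub f0 x coverP.
have blocks_le_singles : \sum_(B in P) f (x @: B) <= \sum_i f [set x i].
  rewrite (sum_partition _ partP); apply: ler_sum => B _.
  exact: subadditive_imset.
have := ler_sum (index_enum _) (fun B (_ : B \in P) =>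
  curvature_complement_bound f_curv B (profile_inj X_part x_greedy.1)).
rewrite big_split /= -mulr_sumr sumrB -(sum_partition _ partP) !sumr_const.
rewrite -[(\sum_i _) *+ _]mulr_natr -[f _ *+ _]mulr_natr => blocks_le.
move: exch nbrs_le blocks_le_singles blocks_le; rewrite /fval /xM.
move: (\sum_i marg _ _ _) (\sum_(B in P) _) (\sum_i f _) => G Sa F.
move: (f (x @: _)) (f (o @: _)) t_ge1 => fx fo; move: (#|P|%:R) => t t_ge1.
move=> exch G_le Sa_le blocks_le.
(* With c := t - (t - 1) lam: c Sa <= Sa + (1 - lam) (t - 1) F <= t fx, hence
   c fo <= c fx + lam c G <= c fx + lam c Sa <= (t + lam) fx. *)
have c_ge0 : 0 <= t - (t - 1) * lam by nra.
have Sa_bound : (t - (t - 1) * lam) * Sa <= t * fx.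
  have : 0 <= (1 - lam) * (t - 1) * (F - Sa) by rewrite !mulr_ge0 ?subr_ge0 // ltW.
  nra.
have := ler_wpM2l c_ge0 exch; have := ler_wpM2l (ltW lam0) Sa_bound.
have := ler_wpM2l (mulr_ge0 (ltW lam0) c_ge0) G_le.
nra.
Qed.
End GreedyBound.

Lemma inf_le_ge0 (R : realType) (E : set R) r :
  (forall s, E s -> 0 <= s) -> E r -> inf E <= r.
Proof. by move=> E_ge0; apply: ge_inf; exists 0 => s /E_ge0. Qed.

Section Gamma.
Variables (R : realType) (S : finType) (n : nat) (e : rel 'I_n).
Variables (f : {set S} -> R) (X : 'I_n -> {set S}).
Hypotheses (f_ge0 : nonneg_sf f) (X_part : decision_partition X).
Hypothesis opt_gt0 : 0 < fopt f X.

Lemma fopt_le (M : R) :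
  0 <= M -> (forall o, profile X o -> fval f o <= M) -> fopt f X <= M.
Proof. by move=> M_ge0 oM; apply: bigmax_le => // o /forallP /oM. Qed.

Lemma fval_div_fopt_ge0 (x : 'I_n -> S) : 0 <= fval f x / fopt f X.
Proof. exact: divr_ge0 (f_ge0 _) (ltW opt_gt0). Qed.

Lemma gamma_ge0 : 0 <= gamma f X e.
Proof.
apply: lb_le_inf => [|_ [x [_ ->]]]; last exact: fval_div_fopt_ge0.
by have [x xG] := greedy_exists X_part f e; exists (fval f x / fopt f X), x.
Qed.

Lemma gamma_le_greedy x : greedy f X e x -> gamma f X e <= fval f x / fopt f X.
Proof.
move=> xG; apply: inf_le_ge0 => [_ [y [_ ->]]|]; first exact: fval_div_fopt_ge0.
by exists x.
Qed.

Lemma gamma_ge_clique_cover lam (P : {set {set 'I_n}}) :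
  0 < lam < 1 -> in_F lam f -> clique_cover e P -> (0 < #|P|)%N ->
  (#|P|%:R - (#|P|%:R - 1) * lam) / (#|P|%:R + lam) <= gamma f X e.
Proof.
move=> lam01 fF coverP P_gt0; have /andP [lam0 lam1] := lam01.
have t_ge1 : 1 <= #|P|%:R :> R by rewrite ler1n.
apply: lb_le_inf => [|_ [x [xG ->]]].
  by have [x xG] := greedy_exists X_part f e; exists (fval f x / fopt f X), x.
have c_gt0 : 0 < #|P|%:R - (#|P|%:R - 1) * lam :> R by nra.
have d_gt0 : 0 < #|P|%:R + lam :> R by lra.
have opt_le :
    fopt f X <= (#|P|%:R + lam) / (#|P|%:R - (#|P|%:R - 1) * lam) * fval f x.
  apply: fopt_le => [|o oP]; first by rewrite mulr_ge0 ?divr_ge0 ?f_ge0 ?ltW.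
  rewrite mulrAC ler_pdivlMr // mulrC.
  exact: greedy_clique_cover_bound lam01 fF X_part xG o P oP coverP P_gt0.
rewrite ler_pdivlMr // mulrAC ler_pdivrMr //.
apply: le_trans (ler_wpM2l (ltW c_gt0) opt_le) _.
by rewrite mulrA mulrCA mulfV ?gt_eqF // mulr1 mulrC.
Qed.
End Gamma.

Lemma gamma_lambda_le_gamma (R : realType) (lam : R) n (e : rel 'I_n) (S : finType)
    (f : {set S} -> R) (X : 'I_n -> {set S}) :
  in_F lam f -> decision_partition X -> 0 < fopt f X ->
  gamma_lambda lam e <= gamma f X e.
Proof.
move=> fF X_part opt_gt0; apply: inf_le_ge0; last by exists S, f, X.
by move=> _ [S' [f' [X' [[f'_ge0 _ _ _ _] X'_part opt'_gt0 ->]]]]; exact: gamma_ge0.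
Qed.

Section Trap.
Variables (R : realType) (n : nat) (lam : R) (I : {set 'I_n}).

Definition layer (b : bool) : {set 'I_n * bool} := [set (i, b) | i in I].

Lemma mem_layer b j c : ((j, c) \in layer b) = (j \in I) && (c == b).
Proof.
apply/idP/idP => [/imsetP [i iI [ji cb]] | /andP [jI /eqP ->]].
  by subst; rewrite iI eqxx.
by apply/imsetP; exists j.
Qed.

Lemma card_imset_pair_layer b c :
  #|[set (i, b) | i in [set: 'I_n]] :&: layer c| = if b == c then #|I| else 0%N.
Proof.
case: eqP => [<- | /eqP bc].
  rewrite (setIidPr _); first by rewrite card_imset // => i j [].
  by apply/fintype.subsetP => _ /imsetP [i _ ->]; rewrite imset_f ?inE.
rewrite disjoint_setI0 ?cards0 //; apply/pred0P => s /=.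
by apply/andP => -[/imsetP [i _ ->]]; rewrite mem_layer (negbTE bc) andbF.
Qed.

Definition trap (A : {set 'I_n * bool}) : R :=
  (1 - lam) * #|A :&: layer false|%:R + lam * (#|A :&: layer false| != 0)%N%:R
  + #|A :&: layer true|%:R.

Lemma trap0 : trap set0 = 0.
Proof. by rewrite /trap !set0I cards0 /= !mulr0 !addr0. Qed.

Lemma marg_trap s (A : {set 'I_n * bool}) : s \notin A -> marg trap [set s] A =
  (s \in layer false)%:R * (1 - lam + lam * (#|A :&: layer false| == 0)%N%:R)
  + (s \in layer true)%:R.
Proof.
move=> sA; rewrite /marg /trap !cardsU1I // !natrD.
by case: (s \in layer false); case: (s \in layer true);
  case: (#|A :&: layer false| == 0)%N; rewrite ?add0n ?add1n /=; ring.
Qed.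

Lemma trap_set1 j b : trap [set (j, b)] = (j \in I)%:R.
Proof.
have := marg_trap (A := set0) (s := (j, b)).
rewrite inE /marg setU0 trap0 subr0 => -> //.
by rewrite set0I cards0 !mem_layer; case: b; case: (j \in I) => /=; ring.
Qed.

Lemma trap_in_F : 0 < lam < 1 -> in_F lam trap.
Proof.
move=> /andP [lam0 lam1]; split.
- move=> A; rewrite /trap.
  have := ler0n R #|A :&: layer false|; have := ler0n R #|A :&: layer true|.
  by case: (_ != 0)%N => /=; nra.
- exact: trap0.
- move=> s A; case: (boolP (s \in A)) => sA; first by rewrite marg_mem.
  rewrite marg_trap //.
  by case: (s \in layer false); case: (s \in layer true); case: (_ == 0)%N => /=; lra.
- move=> A B s AB sB.
  have sA : s \notin A by apply: contra sB; apply: (fintype.subsetP AB).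
  have empty_mono : (#|B :&: layer false| == 0)%N ==> (#|A :&: layer false| == 0)%N.
    by rewrite -!leqn0; apply/implyP/leq_trans/subset_leq_card/setSI.
  rewrite !marg_trap //; move: empty_mono.
  by case: (s \in layer false); case: (_ == 0)%N; case: (_ == 0)%N => //= _; lra.
- move=> [j b] A jbA; rewrite marg_trap // trap_set1 !mem_layer {jbA}.
  by case: (j \in I); case: b; case: (_ == 0)%N => /=; lra.
Qed.

Definition pair_sets (i : 'I_n) : {set 'I_n * bool} := [set s | s.1 == i].

Lemma pair_sets_partition : decision_partition pair_sets.
Proof.
split=> [i | i j ij | s]; last by exists s.1; rewrite inE.
  by apply/set0Pn; exists (i, false); rewrite inE.
by apply/pred0P => s /=; rewrite !inE; case: eqP => //= ->; exact: negbTE.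
Qed.

Lemma layer_false_greedy (e : rel 'I_n) :
  0 < lam < 1 -> is_indep e I -> greedy trap pair_sets e (fun i => (i, false)).
Proof.
move=> lam01; have /andP [lam0 lam1] := lam01.
have [_ _ t_mono t_sub _] := trap_in_F lam01.
move=> indepI; split=> [i | i [j b]]; first by rewrite inE.
rewrite inE /= => /eqP ->; set N := xM _ (nbrs e i).
apply: le_trans (marg_le_set1 t_mono t_sub trap0 _ N) _; rewrite trap_set1.
have [iI | _] := boolP (i \in I); last exact: t_mono.
have N_shared : N :&: layer false = set0.
  apply/setP => s; rewrite !inE; apply/andP => -[/imsetP [k + ->]].
  rewrite inE mem_layer andbT => /andP [_ ki] kI.
  by move: ki; rewrite (negbTE (indep_nonedge indepI kI iI)).
rewrite marg_trap ?N_shared ?cards0 ?mem_layer ?iI /=; first lra.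
by apply/imsetP => -[k]; rewrite inE => /andP [ki _] [ik]; move: ki; rewrite ik ltnn.
Qed.

Lemma fval_layer_false :
  fval trap (fun i => (i, false)) = (1 - lam) * #|I|%:R + lam * (#|I| != 0)%N%:R.
Proof. by rewrite /fval /xM /trap !card_imset_pair_layer /= addr0. Qed.

Lemma fopt_trap_ge : #|I|%:R <= fopt trap pair_sets.
Proof.
pose o : {ffun 'I_n -> 'I_n * bool} := [ffun i => (i, true)].
have oP : [forall i, o i \in pair_sets i] by apply/forallP => i; rewrite ffunE inE.
apply: le_trans (le_bigmax_cond _ _ oP); rewrite /fval /xM.
rewrite (eq_imset _ (ffunE _)) /trap !card_imset_pair_layer /=.
by rewrite mulr0 mulr0 !add0r.
Qed.

Lemma fopt_trap_gt0 : (0 < #|I|)%N -> 0 < fopt trap pair_sets.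
Proof. by move=> I_gt0; apply: lt_le_trans fopt_trap_ge; rewrite ltr0n. Qed.

Lemma gamma_lambda_le_indep (e : rel 'I_n) :
  0 < lam < 1 -> is_indep e I -> (0 < #|I|)%N ->
  gamma_lambda lam e <= (#|I|%:R - (#|I|%:R - 1) * lam) / #|I|%:R.
Proof.
move=> lam01 indepI I_gt0; have /andP [lam0 lam1] := lam01.
have trapF := trap_in_F lam01; have opt_gt0 := fopt_trap_gt0 I_gt0.
apply: le_trans (gamma_lambda_le_gamma e trapF pair_sets_partition opt_gt0) _.
apply: le_trans (gamma_le_greedy _ opt_gt0 (layer_false_greedy lam01 indepI)) _.
  by case: trapF.
rewrite fval_layer_false -lt0n I_gt0 mulr1.
have -> : #|I|%:R - (#|I|%:R - 1) * lam = (1 - lam) * #|I|%:R + lam :> R by ring.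
apply: ler_wpM2l; first by rewrite addr_ge0 ?mulr_ge0 ?subr_ge0 // ltW.
by rewrite lef_pV2 ?posrE ?ltr0n // fopt_trap_ge.
Qed.
End Trap.

Lemma gamma_lambda_ge_clique_cover (R : realType) (lam : R) n (e : rel 'I_n) P :
  0 < lam < 1 -> (0 < n)%N -> clique_cover e P ->
  (#|P|%:R - (#|P|%:R - 1) * lam) / (#|P|%:R + lam) <= gamma_lambda lam e.
Proof.
move=> lam01 n_gt0 coverP.
apply: lb_le_inf => [|_ [S [f [X [fF X_part opt_gt0 ->]]]]].
  pose I := [set Ordinal n_gt0].
  exists (gamma (trap lam I) (@pair_sets n) e); hnf.
  exists ('I_n * bool)%type, (trap lam I), (@pair_sets n); split => //.
  - exact: trap_in_F.
  - exact: pair_sets_partition.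
  - by apply: fopt_trap_gt0; rewrite cards1.
apply: gamma_ge_clique_cover => //; first by case: fF.
exact: clique_cover_card_gt0 coverP n_gt0.
Qed.

Theorem lemma4 (R : realType) (lam : R) (n : nat) (e : rel 'I_n) :
  0 < lam < 1 -> (0 < n)%N -> symmetric e -> irreflexive e ->
  let a : R := (alpha e)%:R in
  let t : R := (theta e)%:R in
  gamma_lambda lam e <= (a - (a - 1) * lam) / a /\
  (t - (t - 1) * lam) / (t + lam) <= gamma_lambda lam e.
Proof.
move=> lam01 n_gt0 _ e_irr a t; split.
  have [I indepI cardI] := alpha_attained e.
  rewrite /a -cardI; apply: gamma_lambda_le_indep => //.
  by rewrite cardI alpha_gt0.
have [P coverP cardP] := theta_attained e.
by rewrite /t -cardP; apply: gamma_lambda_ge_clique_cover.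
Qed.
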